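(* For every $n\geq 2$, letting $P_n$ denote the path with $n$ edges (and $n+1$ vertices), ${\rm ML}^{\rm W}(P_n)=0$ if $n=2$; ${\rm ML}^{\rm W}(P_n)=1$ if $n=3$; ${\rm ML}^{\rm W}(P_n)=2$ if $n\in\{4,5\}$; and ${\rm ML}^{\rm W}(P_n)=2n-10$ otherwise.
   Context: A walk of a graph $G$ is a sequence of vertices $u_0u_1\dots u_p$ with $u_tu_{t+1}\in E(G)$ for all $t$ (vertices and edges may repeat); its length is $p$. For a walk $W$ of $G$, $G+W$ is the multigraph on $V(G)$ whose edge multiset consists of $E(G)$ together with each edge added as many times as $W$ traverses it. A multigraph is locally irregular if no two adjacent vertices have the same degree; a walk is irregularising if $G+W$ is locally irregular. ${\rm ML}^{\rm W}(G)$ denotes the minimum length of an irregularising walk of $G$, where the trivial walk consisting of a single vertex (length $0$) is allowed. *)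

From mathcomp Require Import all_boot.
Set Implicit Arguments. Unset Strict Implicit. Unset Printing Implicit Defensive.

(* A simple graph: symmetric irreflexive relation e on a finite vertex type T. *)

Definition gdeg (T : finType) (e : rel T) (v : T) : nat := #|[set w | e v w]|.

(* A walk u_0 u_1 ... u_p is represented by its first vertex x = u_0 and the
   sequence s = [:: u_1; ...; u_p]; its length is size s. *)
Definition is_walk (T : finType) (e : rel T) (x : T) (s : seq T) : bool :=
  path e x s.

Definition walk_length (T : finType) (x : T) (s : seq T) : nat := size s.

(* Number of edge-ends at v added by the walk: each traversal of an edge ab
   adds one copy of ab, contributing 1 to the degree of a and 1 to that of b. *)
Definition walk_extra_deg (T : finType) (x : T) (s : seq T) (v : T) : nat :=
  \sum_(p <- zip (x :: s) s) ((p.1 == v) + (p.2 == v)).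

Definition plus_walk_deg (T : finType) (e : rel T) (x : T) (s : seq T) (v : T)
  : nat := gdeg e v + walk_extra_deg x s v.

(* G + W is locally irregular (adjacency in G+W equals adjacency in G). *)
Definition irregularising (T : finType) (e : rel T) (x : T) (s : seq T) : Prop :=
  is_walk e x s /\
  forall u v : T, e u v -> plus_walk_deg e x s u <> plus_walk_deg e x s v.

Definition MLW_eq (T : finType) (e : rel T) (m : nat) : Prop :=
  (exists (x : T) (s : seq T), irregularising e x s /\ walk_length x s = m) /\
  (forall (x : T) (s : seq T), irregularising e x s -> m <= walk_length x s).

Definition path_rel (n : nat) : rel 'I_n.+1 :=
  fun i j => (i.+1 == j :> nat) || (j.+1 == i :> nat).

From mathcomp Require Import all_boot zify.
Set Implicit Arguments. Unset Strict Implicit. Unset Printing Implicit Defensive.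

(* Let m_c be the number of times the walk traverses the edge c(c+1) of P_n.
   In P_n + W a vertex has degree the sum of 1 + m_e over its incident edges e,
   so P_n + W is locally irregular exactly when m_i <> m_(i+2) for i <= n - 3.
   The traversed edges form an interval, and m_c is odd exactly on the edges
   between the two ends of the walk.  For n >= 6 this forces m_c > 0 for
   2 <= c <= n - 3 (if m_c = 0, then m_(c-2) and m_(c+2) are both positive),
   and splits these n - 4 edges into the two chains c, c + 2, c + 4, ...,
   along which neighbouring values differ and the odd values are consecutive.
   Such a chain of t positive values sums to at least 2t - 1, so the walk has
   length at least 2(n - 4) - 2 = 2n - 10.  Repeating blocks of multiplicities
   1, 1, 3, 3 along the path, with ends adapted to n mod 4, attains it. *)

Definition nat_adj (a b : nat) : bool := (a.+1 == b) || (b.+1 == a).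

Definition crosses (c a b : nat) : bool :=
  ((a == c) && (b == c.+1)) || ((a == c.+1) && (b == c)).

Fixpoint crossings (c a : nat) (s : seq nat) : nat :=
  if s is b :: s' then crosses c a b + crossings c b s' else 0.

Definition irregular_profile (n a : nat) (t : seq nat) : Prop :=
  forall i, i + 3 <= n -> crossings i a t != crossings i.+2 a t.

Lemma crosses_succ c a : crosses c a a.+1 = (a == c).
Proof. by rewrite /crosses; case: ltngtP; lia. Qed.

Lemma crosses_pred c a : crosses c a.+1 a = (a == c).
Proof. by rewrite /crosses; case: ltngtP; lia. Qed.

Lemma crosses_adj c a b : nat_adj a b -> crosses c a b = ((a <= c) != (b <= c)).
Proof. by case/orP=> /eqP <-; rewrite /crosses; case: ltngtP; lia. Qed.

Lemma crosses_adj_min c a b : nat_adj a b -> crosses c a b = (c == minn a b).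
Proof. by case/orP=> /eqP <-; rewrite /crosses; case: ltngtP; lia. Qed.

Lemma endpoints_crosses v a b : nat_adj a b ->
  (a == v) + (b == v) = (0 < v) * crosses v.-1 a b + crosses v a b.
Proof. by case/orP=> /eqP <-; rewrite /crosses; case: v => [|v] /=; lia. Qed.

Lemma crossings_cat c a s1 s2 :
  crossings c a (s1 ++ s2) = crossings c a s1 + crossings c (last a s1) s2.
Proof. by elim: s1 a => [|b s1 IH] a //=; rewrite IH addnA. Qed.

Lemma odd_crossings c a t : path nat_adj a t ->
  odd (crossings c a t) = ((a <= c) != (last a t <= c)).
Proof.
elim: t a => [|b t IH] a /=; first by case: (a <= c).
case/andP=> ab bt; rewrite oddD IH // crosses_adj // oddb.
by case: (a <= c); case: (b <= c); case: (last b t <= c).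
Qed.

Lemma crossings_gt0 c a t : path nat_adj a t ->
  (0 < crossings c a t) = has (leq^~ c) (a :: t) && has (ltn c) (a :: t).
Proof.
elim: t a => [|b t IH] a /=; first by rewrite !orbF; case: (leqP a c).
case/andP=> ab bt; rewrite addn_gt0 IH // crosses_adj // /=.
by case: (leqP a c); case: (leqP b c).
Qed.

Lemma crossings_gt0_between i c k a t : path nat_adj a t -> i <= c <= k ->
  0 < crossings i a t -> 0 < crossings k a t -> 0 < crossings c a t.
Proof.
move=> walk /andP[ic ck]; rewrite !crossings_gt0 // => /andP[lo _] /andP[_ hi].
by apply/andP; split; [apply: sub_has lo | apply: sub_has hi] => u /=; lia.
Qed.

Lemma sum_nat_pred1 lo hi k : \sum_(lo <= c < hi) (c == k) = (lo <= k < hi).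
Proof.
rewrite (eq_bigr (fun c => if c == k then 1 else 0)) // -big_mkcond big_nat1_eq.
by case: (lo <= k < hi).
Qed.

Lemma sum_crossings_le_size lo hi a t : path nat_adj a t ->
  \sum_(lo <= c < hi) crossings c a t <= size t.
Proof.
elim: t a => [|b t IH] a /=; first by rewrite big1.
case/andP=> ab bt; rewrite big_split /= -addn1 addnC leq_add ?IH //.
under eq_bigr do rewrite crosses_adj_min //.
by rewrite sum_nat_pred1 leq_b1.
Qed.

Lemma sum_nat_split_parity (f : nat -> nat) j k :
  \sum_(j <= c < j + k) f c =
  \sum_(0 <= l < uphalf k) f (j + 2 * l) + \sum_(0 <= l < k./2) f (j.+1 + 2 * l).
Proof.
elim: k j => [|k IH] j; first by rewrite addn0 !big_geq.
rewrite big_ltn ?addnS ?ltnS ?leq_addr // -addSn IH /= big_nat_recl //.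
have shift i : j + 2 * i.+1 = j.+2 + 2 * i by lia.
under [in RHS]eq_bigr do rewrite shift.
by rewrite muln0 addn0 addnAC addnA.
Qed.

Lemma sum_chain_ge (g : nat -> nat) t :
  (forall x y z, x <= y <= z -> odd (g x) -> odd (g z) -> odd (g y)) ->
  (forall i, i < t -> 0 < g i) ->
  (forall i, i.+1 < t -> g i != g i.+1) ->
  2 * t <= (\sum_(0 <= i < t) g i).+1.
Proof.
elim/ltn_ind: t g => t IH g convex pos dist.
case: t IH pos dist => [|[|t]] IH pos dist.
- by rewrite big_geq.
- by rewrite big_nat1; exact: pos 0 isT.
have convex_shift k : forall x y z, x <= y <= z ->
    odd (g (x + k)) -> odd (g (z + k)) -> odd (g (y + k)).
  by move=> x y z xyz; apply: convex; lia.
have IHshift k : 0 < k <= t.+2 ->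
    2 * (t.+2 - k) <= (\sum_(0 <= i < t.+2 - k) g (i + k)).+1.
  move=> kt; apply: IH (convex_shift k) _ _ => [|i ik|i ik]; first lia.
  - by apply: pos; lia.
  - by rewrite addSn; apply: dist; lia.
rewrite big_nat_recl //.
have [g0_ge2 | g0_lt2] := leqP 2 (g 0).
  have := IHshift 1 isT; rewrite !subSS subn0; under eq_bigr do rewrite addn1; lia.
have g0_1 : g 0 = 1 by have := pos 0; lia.
rewrite big_nat_recl //.
have [odd_g1 | even_g1] := boolP (odd (g 1)).
  have g1_ge3 : 3 <= g 1.
    by move: (dist 0 isT) (pos 1 isT) odd_g1; rewrite g0_1; case: (g 1) => [|[|[|]]].
  have := IHshift 2 isT; rewrite !subSS subn0; under eq_bigr do rewrite addn2; lia.
have even_rest i : i < t -> 2 <= g i.+2.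
  move=> it; have gi_pos := pos i.+2 it.
  have gi_even : ~~ odd (g i.+2).
    by apply: contra even_g1 => odd_gi; apply: (convex 0 1 i.+2); rewrite ?g0_1.
  by move: gi_pos gi_even; case: (g i.+2) => [|[|]].
have : \sum_(0 <= i < t) 2 <= \sum_(0 <= i < t) g i.+2.
  rewrite big_nat_cond [in X in _ <= X]big_nat_cond.
  by apply: leq_sum => i /andP[/andP[_ /even_rest]].
rewrite sum_nat_const_nat subn0; have := pos 1 isT; lia.
Qed.

Lemma size_ge_irregular_profile n a t : 6 <= n -> path nat_adj a t ->
  irregular_profile n a t ->
  2 * n - 10 <= size t.
Proof.
move=> n_ge6 walk dist; pose m c := crossings c a t.
have pos c : 2 <= c -> c + 3 <= n -> 0 < m c.
  move=> c_ge2 c_le; rewrite lt0n; apply/eqP => mc0.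
  have lo : 0 < m (c - 2).
    have := dist (c - 2) ltac:(lia); rewrite (_ : (c - 2).+2 = c); last lia.
    by rewrite -/(m c) mc0 lt0n.
  have hi : 0 < m c.+2 by have := dist c c_le; rewrite -/(m c) mc0 lt0n eq_sym.
  have := @crossings_gt0_between (c - 2) c c.+2 a t walk ltac:(lia) lo hi.
  by rewrite -/(m c) mc0.
have convex x y z : x <= y <= z -> odd (m x) -> odd (m z) -> odd (m y).
  rewrite /m !odd_crossings //.
  by case: (leqP a x); case: (leqP a y); case: (leqP a z); case: (leqP (last a t) x);
     case: (leqP (last a t) y); case: (leqP (last a t) z) => //=; lia.
have chain j k : 2 <= j -> j + 2 * k < n ->
    2 * k <= (\sum_(0 <= l < k) m (j + 2 * l)).+1.
  move=> j_ge2 jk; apply: sum_chain_ge => [x y z xyz|l lk|l lk].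
  - by apply: convex; lia.
  - by apply: pos; lia.
  - by rewrite (_ : j + 2 * l.+1 = (j + 2 * l).+2); [apply: dist|]; lia.
have := sum_crossings_le_size 2 (2 + (n - 4)) walk.
rewrite sum_nat_split_parity.
have := chain 2 (uphalf (n - 4)) isT ltac:(rewrite uphalfE; lia).
have := chain 3 (n - 4)./2 isT ltac:(lia).
rewrite /m uphalfE; lia.
Qed.

Lemma size_ge_irregular_profile_small n a t : 3 <= n -> path nat_adj a t ->
  irregular_profile n a t ->
  minn 2 (n - 2) <= size t.
Proof.
move=> n_ge3 walk dist; have := dist 0 n_ge3.
have [n3 | n_ge4] := ltnP n 4.
  have := sum_crossings_le_size 0 3 walk.
  by rewrite !big_nat_recr //= big_geq //; lia.
have := dist 1 n_ge4; have := sum_crossings_le_size 0 4 walk.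
by rewrite !big_nat_recr //= big_geq //; lia.
Qed.

Section PathGraph.
Variable n : nat.
Implicit Types (x v : 'I_n.+1) (s : seq 'I_n.+1).

Lemma path_rel_path x s : path (@path_rel n) x s = path nat_adj x (map val s).
Proof. by rewrite path_map. Qed.

Lemma crossings_path_rel_end x s :
  path (@path_rel n) x s -> crossings n x (map val s) = 0.
Proof.
rewrite path_rel_path => walk; apply/eqP; rewrite -leqn0 leqNgt crossings_gt0 //.
rewrite andbC -map_cons; apply/negP => /andP[/hasP[_ /mapP[u _ ->]]].
by rewrite /ltn /= ltnNge -ltnS ltn_ord.
Qed.

Lemma gdeg_path_rel v : gdeg (@path_rel n) v = (0 < v) + (v < n).
Proof.
rewrite /gdeg -sum1_card big_mkcond /=.
rewrite (eq_bigr (fun w : 'I_n.+1 => (w == v.+1 :> nat) + (w == v.-1 :> nat) * (0 < v)));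
  last first.
  by move=> w _; rewrite inE /path_rel; case: ifP; case: (val v) => [|u] /=; lia.
rewrite -(big_mkord (fun _ => true) (fun w => (w == v.+1) + (w == v.-1) * (0 < v))).
rewrite big_split -big_distrl /= !sum_nat_pred1.
by case: (val v) (ltn_ord v) => [|u] /=; lia.
Qed.

Lemma walk_extra_deg_path_rel x s v : path (@path_rel n) x s ->
  walk_extra_deg x s v =
  (0 < v) * crossings v.-1 x (map val s) + crossings v x (map val s).
Proof.
elim: s x => [|y s IH] x; first by rewrite /walk_extra_deg big_nil muln0.
rewrite /walk_extra_deg /= big_cons -/(walk_extra_deg y s v) => /andP[xy ys].
by rewrite IH // endpoints_crosses // mulnDr addnACA.
Qed.

Lemma plus_walk_deg_path_rel x s v : path (@path_rel n) x s ->
  plus_walk_deg (@path_rel n) x s v =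
  (0 < v) * (crossings v.-1 x (map val s)).+1 + (v < n) * (crossings v x (map val s)).+1.
Proof.
move=> walk; rewrite /plus_walk_deg gdeg_path_rel walk_extra_deg_path_rel //.
have [v_lt_n | v_ge_n] := ltnP v n; last first.
  have -> : v = n :> nat by have := ltn_ord v; lia.
  by rewrite crossings_path_rel_end //; case: (0 < n); lia.
by case: (0 < v); lia.
Qed.

Lemma irregularising_path_relP x s : 2 <= n ->
  irregularising (@path_rel n) x s <->
  path (@path_rel n) x s /\ irregular_profile n x (map val s).
Proof.
move=> n_ge2; split=> [[walk irr] | [walk dist]]; split=> //.
  move=> i i_le; have := irr (inord i.+1) (inord i.+2).
  have e1 : (inord i.+1 : 'I_n.+1) = i.+1 :> nat by rewrite inordK //; lia.
  have e2 : (inord i.+2 : 'I_n.+1) = i.+2 :> nat by rewrite inordK //; lia.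
  have [i1 i2] : i.+1 < n /\ i.+2 < n by lia.
  rewrite !plus_walk_deg_path_rel // /path_rel !e1 !e2 eqxx !ltn0Sn i1 i2 /=.
  by move=> /(_ isT); lia.
move=> u v uv; wlog e : u v uv / u.+1 = v :> nat.
  move=> hw; case/orP: (uv) => /eqP e; first exact: hw.
  by apply/nesym/hw => //; rewrite /path_rel orbC.
rewrite !plus_walk_deg_path_rel // -e /=; set t := map val s in dist *.
have := ltn_ord v; rewrite -e ltnS.
case: (val u) => [|k] /= u_lt; rewrite u_lt; first by rewrite n_ge2; lia.
have [k_lt | _] := ltnP k.+2 n; last lia.
by have := dist k ltac:(lia); lia.
Qed.

End PathGraph.

Definition irregularising_on (n a : nat) (t : seq nat) : Prop :=
  [/\ a <= n, all (leq^~ n) t, path nat_adj a t &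
      irregular_profile n a t].

Lemma irregularising_on_lift n a t : 2 <= n -> irregularising_on n a t ->
  exists (x : 'I_n.+1) (s : seq 'I_n.+1),
    irregularising (@path_rel n) x s /\ walk_length x s = size t.
Proof.
move=> n_ge2 [a_le t_le walk dist].
have t_val : map val (map (@inord n) t) = t.
  by rewrite -map_comp map_id_in // => u /(allP t_le) u_le /=; rewrite inordK.
have a_val : (inord a : 'I_n.+1) = a :> nat by rewrite inordK.
exists (inord a), (map (@inord n) t); split; last by rewrite /walk_length size_map.
by apply/irregularising_path_relP; rewrite // path_rel_path t_val a_val.
Qed.

(* Traverses the edges v, v+1, v+2, v+3 once, once, three and three times. *)
Definition block (v : nat) : seq nat :=
  [:: v.+1; v.+2; v.+3; v.+4; v.+3; v.+2; v.+3; v.+4].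

Fixpoint blocks (v q : nat) : seq nat :=
  if q is q'.+1 then block v ++ blocks v.+4 q' else [::].

Lemma path_blocks v q : path nat_adj v (blocks v q).
Proof.
by elim: q v => [|q IH] v //=; rewrite IH /nat_adj /= !eqxx /= ?orbT.
Qed.

Lemma last_blocks v q : last v (blocks v q) = v + 4 * q.
Proof. by elim: q v => [|q IH] v /=; rewrite ?addn0 // IH; lia. Qed.

Lemma size_blocks v q : size (blocks v q) = 8 * q.
Proof. by elim: q v => [|q IH] v //=; rewrite IH; lia. Qed.

Lemma blocks_le v q m : v + 4 * q <= m -> all (leq^~ m) (blocks v q).
Proof.
elim: q v => [|q IH] v //= vq_le; rewrite IH ?andbT; last lia.
by repeat (apply/andP; split); lia.
Qed.

Lemma path_blocks_cat v q s :
  path nat_adj v (blocks v q ++ s) = path nat_adj (v + 4 * q) s.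
Proof. by rewrite cat_path path_blocks last_blocks. Qed.

Lemma crossings_blocks c v q : crossings c v (blocks v q) =
  if v <= c < v + 4 * q then (if (c - v) %% 4 < 2 then 1 else 3) else 0.
Proof.
elim: q v => [|q IH] v /=; first by case: ifP; lia.
rewrite IH !crosses_succ !crosses_pred.
by repeat case: ifP; repeat case: eqP; lia.
Qed.

Lemma crossings_blocks_cat c v q s : crossings c v (blocks v q ++ s) =
  (if v <= c < v + 4 * q then (if (c - v) %% 4 < 2 then 1 else 3) else 0) +
  crossings c (v + 4 * q) s.
Proof. by rewrite crossings_cat crossings_blocks last_blocks. Qed.

Ltac solve_crossings_profile :=
  move=> i i_le; rewrite /= ?crossings_blocks_cat /= ?crosses_succ ?crosses_pred;
  repeat match goal with |- context [if _ then _ else _] =>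
    case: ifP => ?; try (exfalso; lia) end;
  repeat match goal with |- context [?x == ?y] =>
    case: (x =P y) => ?; try (exfalso; lia) end;
  lia.

Lemma exists_long_irregularising_on n : 6 <= n ->
  exists a t, irregularising_on n a t /\ size t = 2 * n - 10.
Proof.
move=> n_ge6.
have [q [r [r_lt4 ->]]] : exists q r, r < 4 /\ n = 4 * q + 6 + r.
  by exists ((n - 6) %/ 4), ((n - 6) %% 4); split; lia.
(* Crossing profiles: 0 0 (1 1 3 3)^q followed by 1 1, 1 1 2 or 1 1 2 2, and
   0 0 2 (1 1 3 3)^q 1 1 2 2; all end with 0 0. *)
case: r r_lt4 => [|[|[|[|//]]]] _;
  [ exists 2, (blocks 2 q ++ [:: (2 + 4 * q).+1; (2 + 4 * q).+2])
  | exists 2, (blocks 2 q ++ [:: (2 + 4 * q).+1; (2 + 4 * q).+2; (2 + 4 * q).+3;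
                               (2 + 4 * q).+2])
  | exists 2, (blocks 2 q ++ [:: (2 + 4 * q).+1; (2 + 4 * q).+2; (2 + 4 * q).+3;
                               (2 + 4 * q).+4; (2 + 4 * q).+3; (2 + 4 * q).+2])
  | exists 3, ([:: 2; 3] ++ blocks 3 q ++
               [:: (3 + 4 * q).+1; (3 + 4 * q).+2; (3 + 4 * q).+3;
                   (3 + 4 * q).+4; (3 + 4 * q).+3; (3 + 4 * q).+2]) ].
all: split; [split; [lia | | | solve_crossings_profile] |].
all: rewrite /= ?all_cat ?path_blocks_cat ?size_cat ?size_blocks ?blocks_le /=.
all: rewrite /nat_adj ?eqxx ?orbT //=; lia.
Qed.

Definition mlw_path (n : nat) : nat :=
  if n == 2 then 0
  else if n == 3 then 1
  else if (n == 4) || (n == 5) then 2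
  else 2 * n - 10.

Lemma exists_irregularising_path_rel n : 2 <= n ->
  exists (x : 'I_n.+1) (s : seq 'I_n.+1),
    irregularising (@path_rel n) x s /\ walk_length x s = mlw_path n.
Proof.
rewrite /mlw_path; case: n => [|[|[|[|[|[|n]]]]]] //= _.
- by apply: (@irregularising_on_lift 2 0 [::]) => //; split=> // i; lia.
- by apply: (@irregularising_on_lift 3 0 [:: 1]) => //; split=> // -[|i] //; lia.
- by apply: (@irregularising_on_lift 4 0 [:: 1; 2]) => //; split=> // -[|[|i]] //; lia.
- by apply: (@irregularising_on_lift 5 1 [:: 2; 3]) => //; split=> // -[|[|[|i]]] //; lia.
have [a [t [irr_t <-]]] := @exists_long_irregularising_on n.+4.+2 isT.
exact: (@irregularising_on_lift n.+4.+2 a t isT irr_t).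
Qed.

Lemma mlw_path_le_size n a t : 2 <= n -> path nat_adj a t ->
  irregular_profile n a t ->
  mlw_path n <= size t.
Proof.
move=> n_ge2 walk dist; rewrite /mlw_path; case: ifP => [// | /eqP n_ne2].
have n_ge3 : 2 < n by lia.
have := size_ge_irregular_profile_small n_ge3 walk dist.
case: ifP => [/eqP -> // | /eqP n_ne3].
case: ifP => [n45 | /negbT/norP[/eqP n_ne4 /eqP n_ne5] _].
  by case/orP: n45 => /eqP ->.
by apply: size_ge_irregular_profile walk dist; lia.
Qed.

Lemma mlw_path_le n (x : 'I_n.+1) (s : seq 'I_n.+1) : 2 <= n ->
  irregularising (@path_rel n) x s -> mlw_path n <= walk_length x s.
Proof.
move=> n_ge2 /(irregularising_path_relP _ _ n_ge2) [walk dist].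
rewrite path_rel_path in walk; rewrite /walk_length -(size_map val).
exact: mlw_path_le_size walk dist.
Qed.

Theorem theorem5p5 (n : nat) (hn : 2 <= n) :
  MLW_eq (@path_rel n)
    (if n == 2 then 0
     else if n == 3 then 1
     else if (n == 4) || (n == 5) then 2
     else 2 * n - 10).
Proof.
split; first exact: exists_irregularising_path_rel.
by move=> x s; apply: mlw_path_le.
Qed.
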